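(* Let $G$ be a graph, $e=\{u,v\}\in\binom{V(G)}{2}$, $G^+=G+e$ and $G^-=G-e$. For $\circ\in\{+,-\}$ let $S^\circ=S(G^\circ)$, $R^\circ=R(G^\circ)$, and $W^\circ=C_u(G^\circ)\cup C_v(G^\circ)$. Then: (i) if $\{u,v\} \cap S^+ = \varnothing$, then $N_{G^-}(W^+) \subseteq N_{G^+}(W^+) \subseteq S^+ \subseteq S^-$, $R^- \subseteq R^+$, and $W^- \subseteq W^+$; (ii) if $\{u,v\} \cap S^+ \neq \varnothing$, then $N_{G^-}(W^-) \subseteq N_{G^+}(W^-) \subseteq S^- \subseteq S^+$, $R^+ \subseteq R^-$, and $W^+ \subseteq W^-$.
   Context: $G+e$ and $G-e$ are the graphs on $V(G)$ with edge sets $E(G)\cup\{e\}$ and $E(G)\setminus\{e\}$. For a graph $H$ and $X\subseteq V(H)$, $N_H(X)=\{x\in V(H)\setminus X: xy\in E(H)\text{ for some }y\in X\}$. The strong $4$-core $S(H)$ is the maximal $X\subseteq V(H)$ with $|N_H(x)\cap X|\ge4$ for all $x\in X\cup N_H(X)$; $P(H)=N_H(S(H))$, $R(H)=V(H)\setminus(S(H)\cup P(H))$. For $x\in P(H)\cup R(H)$, $C_x(H)$ is the vertex set of the component of $H[P(H)\cup R(H)]$ (equivalently of $H-S(H)$) containing $x$; for $x\in S(H)$, $C_x(H)=\varnothing$. *)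

From mathcomp Require Import all_boot.
Set Implicit Arguments. Unset Strict Implicit. Unset Printing Implicit Defensive.

(* Graphs: a (simple) graph on a finite vertex type T is an edge relation
   H : rel T (symmetry / irreflexivity are hypotheses of the theorem). *)
Section Defs.
Variable T : finType.

Definition addE (G : rel T) (u v : T) : rel T :=
  fun x y => [|| G x y, (x == u) && (y == v) | (x == v) && (y == u)].
Definition delE (G : rel T) (u v : T) : rel T :=
  fun x y => G x y && ~~ (((x == u) && (y == v)) || ((x == v) && (y == u))).

Definition nbr (H : rel T) (X : {set T}) : {set T} :=
  [set x | (x \notin X) && [exists y in X, H x y]].
Definition nbr1 (H : rel T) (x : T) : {set T} := [set y | H x y].

Definition core_good (H : rel T) (X : {set T}) : bool :=
  [forall x in X :|: nbr H X, 4 <= #|nbr1 H x :&: X|].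

(* The strong 4-core: the maximal good set. Good sets are closed under
   union, so the maximal one is the union of all good sets. *)
Definition score (H : rel T) : {set T} :=
  \bigcup_(X : {set T} | core_good H X) X.
Definition pcore (H : rel T) : {set T} := nbr H (score H).
Definition rcore (H : rel T) : {set T} := ~: (score H :|: pcore H).

Definition outside_rel (H : rel T) : rel T :=
  fun a b => [&& H a b, a \notin score H & b \notin score H].

Definition compC (H : rel T) (x : T) : {set T} :=
  if x \in score H then set0 else [set y | connect (outside_rel H) x y].
End Defs.

From mathcomp Require Import all_boot.
Set Implicit Arguments. Unset Strict Implicit. Unset Printing Implicit Defensive.

(* S(H) is the union of all good sets, so S(H) is itself good and
   S(H) \subset S(H') as soon as S(H) (or S(H) :|: S(H')) is good in H'.
   Goodness of X only sees the edges ending in X.  If u, v lie outside S(G+),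
   then G+ and G- have the same edges into S(G+), so S(G+) is good in G-.
   If u or v lies in S(G+), every G+ edge avoiding S(G+) is a G- edge, which
   makes S(G-) :|: S(G+) good in G+.  Once the cores are compared, the
   components of H - S(H) can only grow when the core shrinks and edges
   avoiding it are kept; and a vertex outside C_u :|: C_v adjacent to it must
   be in the core, since otherwise it would be absorbed into that component,
   either along an old edge or because it is u or v itself. *)

Section StrongCore.
Variable T : finType.
Implicit Types (H : rel T) (X Y : {set T}).

Lemma score_max H X : core_good H X -> X \subset score H.
Proof. by move=> gX; apply: (bigcup_sup X). Qed.

Lemma score_good H : core_good H (score H).
Proof.
apply/forall_inP => x xSN.
have [X gX xXN] : exists2 X, core_good H X & x \in X :|: nbr H X.
  case/setUP: xSN => [/bigcupP [X gX xX] | ].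
    by exists X; rewrite // inE xX.
  rewrite inE => /andP [xS /exists_inP [y /bigcupP [X gX yX] Hxy]].
  exists X; rewrite // !inE; case: (x \in X) => //=.
  by apply/exists_inP; exists y.
apply: leq_trans (forall_inP gX x xXN) _.
by apply/subset_leq_card/setIS/score_max.
Qed.

Lemma nbr_subrel H1 H2 X : subrel H1 H2 -> nbr H1 X \subset nbr H2 X.
Proof.
move=> sH; apply/subsetP => x; rewrite !inE => /andP [-> /exists_inP [y yX Hxy]].
by apply/exists_inP; exists y => //; apply: sH.
Qed.

Lemma core_good_agree H1 H2 X :
  (forall x y, y \in X -> H1 x y = H2 x y) -> core_good H1 X = core_good H2 X.
Proof.
move=> agree; rewrite /core_good.
have -> : nbr H1 X = nbr H2 X.
  apply/setP => x; rewrite !inE; congr (_ && _).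
  by apply: eq_existsb => y; case yX: (y \in X); rewrite //= agree.
apply: eq_forallb => x; congr (_ ==> (4 <= #|(_ : {set T})|)).
by apply/setP => y; rewrite !inE; case yX: (y \in X); rewrite ?andbF ?agree.
Qed.

Lemma score_sub_agree H1 H2 :
  (forall x y, y \in score H2 -> H1 x y = H2 x y) -> score H2 \subset score H1.
Proof. by move=> agree; apply: score_max; rewrite (core_good_agree agree) score_good. Qed.

Lemma core_good_setU H1 H2 X Y :
  subrel H1 H2 -> (forall x y, H2 x y -> x \notin Y -> y \notin Y -> H1 x y) ->
  core_good H1 X -> core_good H2 Y -> core_good H2 (X :|: Y).
Proof.
move=> sH ext gX gY; apply/forall_inP => x xXYN.
case: (boolP (x \in Y :|: nbr H2 Y)) => [xYN | ].
  apply: leq_trans (forall_inP gY x xYN) _.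
  by apply/subset_leq_card/setIS/subsetUr.
rewrite !inE negb_or => /andP [xY xNY].
have xXN : x \in X :|: nbr H1 X.
  move: xXYN; rewrite !inE (negbTE xY) orbF.
  case: (x \in X) => //= /exists_inP [y yXY Hxy].
  have yY : y \notin Y.
    by apply: contra xNY => yY; rewrite xY; apply/exists_inP; exists y.
  move: yXY; rewrite inE (negbTE yY) orbF => yX.
  by apply/exists_inP; exists y => //; apply: ext.
apply: leq_trans (forall_inP gX x xXN) _.
by apply/subset_leq_card/subsetP => y; rewrite !inE => /andP [/sH -> ->].
Qed.

Lemma score_sub_extend H1 H2 :
  subrel H1 H2 -> subrel (outside_rel H2) H1 -> score H1 \subset score H2.
Proof.
move=> sH ext; apply: subset_trans (subsetUl _ (score H2)) (score_max _).
apply: core_good_setU sH _ (score_good H1) (score_good H2) => x y Hxy xS yS.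
by apply: ext; rewrite /outside_rel Hxy xS yS.
Qed.

Lemma rcore_sub H1 H2 :
  score H1 \subset score H2 -> (forall x y, y \in score H1 -> H1 x y -> H2 x y) ->
  rcore H2 \subset rcore H1.
Proof.
move=> sS sH; apply/subsetP => x; rewrite !inE !negb_or => /andP [xS2 xN2].
apply/andP; split; first by apply: contra xS2; apply: (subsetP sS).
apply: contra xN2 => /andP [_ /exists_inP [y yS Hxy]].
rewrite xS2; apply/exists_inP; exists y; last exact: sH.
exact: (subsetP sS).
Qed.

Lemma compC_notin H w y : y \in compC H w -> y \notin score H.
Proof.
rewrite /compC; case: ifP => [_|wS]; first by rewrite inE.
rewrite inE => /connectP [p pP ->].
elim: p w wS pP => [|a p IH] w wS /=; first by rewrite wS.
by case/andP=> /and3P [_ _ aS] pP; apply: (IH a (negbTE aS) pP).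
Qed.

Lemma compC_self H w : w \notin score H -> w \in compC H w.
Proof. by rewrite /compC => /negbTE ->; rewrite inE connect0. Qed.

Lemma compC_ext H w x y :
  y \in compC H w -> H y x -> x \notin score H -> x \in compC H w.
Proof.
move=> yC Hyx xS; have yS := compC_notin yC.
move: yC; rewrite /compC; case: ifP => _; first by rewrite inE.
rewrite !inE => wy; apply: connect_trans wy (connect1 _).
by rewrite /outside_rel Hyx yS xS.
Qed.

Lemma compC_subset H1 H2 w :
  score H2 \subset score H1 -> subrel (outside_rel H1) H2 ->
  compC H1 w \subset compC H2 w.
Proof.
move=> sS sH; have out_S2 z : z \notin score H1 -> z \notin score H2.
  by apply: contra; apply: (subsetP sS).
rewrite /compC; case: ifP => [_|wS]; first exact: sub0set.
rewrite (negbTE (out_S2 w (negbT wS))).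
apply/subsetP => y; rewrite !inE; apply: connect_sub => a b abH1.
apply: connect1; case/and3P: (abH1) => _ aS bS.
by rewrite /outside_rel sH //= !out_S2.
Qed.

Lemma nbr_compC_ends H H' u v :
  symmetric H -> subrel H' (addE H u v) ->
  nbr H' (compC H u :|: compC H v) \subset score H.
Proof.
move=> sH sH'; apply/subsetP => x; rewrite inE => /andP [xW /exists_inP [y yW /sH' Hxy]].
apply: contraR xW => xS; apply/setUP.
case/or3P: Hxy => [Hxy | /andP [/eqP xu _] | /andP [/eqP xv _]].
- rewrite sH in Hxy.
  by case/setUP: yW => yC; [left | right]; apply: compC_ext yC Hxy xS.
- by left; rewrite xu in xS *; apply: compC_self.
- by right; rewrite xv in xS *; apply: compC_self.
Qed.

End StrongCore.

Section EdgeSwitch.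
Variables (T : finType) (G : rel T) (u v : T).
Hypothesis sG : symmetric G.
Local Notation Gp := (addE G u v).
Local Notation Gm := (delE G u v).

Definition is_uv (x y : T) : bool :=
  ((x == u) && (y == v)) || ((x == v) && (y == u)).

Lemma delE_subrel_addE : subrel Gm Gp.
Proof. by move=> x y /andP [Gxy _]; rewrite /addE Gxy. Qed.

Lemma addE_delE x y : ~~ is_uv x y -> Gp x y = Gm x y.
Proof. by rewrite /addE /delE /is_uv => /negbTE ->; rewrite orbF andbT. Qed.

Lemma addE_subrel_addE_delE : subrel Gp (addE Gm u v).
Proof.
move=> x y; case uvxy: (is_uv x y) => Gpxy; apply/orP; [by right | left].
by rewrite -addE_delE ?uvxy.
Qed.

Lemma is_uv_sym x y : is_uv x y = is_uv y x.
Proof. by rewrite /is_uv orbC (andbC (y == u)) (andbC (y == v)). Qed.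

Lemma addE_sym : symmetric Gp.
Proof. by move=> x y; rewrite /addE -!/(is_uv _ _) sG is_uv_sym. Qed.

Lemma delE_sym : symmetric Gm.
Proof. by move=> x y; rewrite /delE -!/(is_uv _ _) sG is_uv_sym. Qed.

Lemma is_uv_notin (X : {set T}) x y :
  u \notin X -> v \notin X -> y \in X -> ~~ is_uv x y.
Proof. by move=> uX vX; apply: contraL => /orP [] /andP [_ /eqP ->]. Qed.

Lemma is_uv_in (X : {set T}) x y :
  (u \in X) || (v \in X) -> x \notin X -> y \notin X -> ~~ is_uv x y.
Proof.
move=> uvX xX yX; apply/negP => /orP [] /andP [/eqP xu /eqP yv];
  by move: uvX; rewrite -xu -yv (negbTE xX) (negbTE yX).
Qed.

End EdgeSwitch.

Theorem lemma4p9 (T : finType) (G : rel T) (u v : T) :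
  symmetric G -> irreflexive G -> u != v ->
  let Gp := addE G u v in
  let Gm := delE G u v in
  let Sp := score Gp in let Sm := score Gm in
  let Rp := rcore Gp in let Rm := rcore Gm in
  let Wp := compC Gp u :|: compC Gp v in
  let Wm := compC Gm u :|: compC Gm v in
  ((u \notin Sp) && (v \notin Sp) ->
     [/\ nbr Gm Wp \subset nbr Gp Wp, nbr Gp Wp \subset Sp, Sp \subset Sm,
         Rm \subset Rp & Wm \subset Wp]) /\
  ((u \in Sp) || (v \in Sp) ->
     [/\ nbr Gm Wm \subset nbr Gp Wm, nbr Gp Wm \subset Sm, Sm \subset Sp,
         Rp \subset Rm & Wp \subset Wm]).
Proof.
move=> sG _ _ Gp Gm Sp Sm Rp Rm Wp Wm; have Gm_Gp := @delE_subrel_addE T G u v.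
split=> [/andP [uS vS] | uvS].
- have agree x y : y \in Sp -> Gm x y = Gp x y.
    by move=> yS; rewrite /Gm /Gp addE_delE // (is_uv_notin x uS vS yS).
  have sS : Sp \subset Sm by apply: score_sub_agree.
  split; first exact: nbr_subrel.
  + by apply: nbr_compC_ends (addE_sym u v sG) _ => x y Gpxy; apply/orP; left.
  + exact: sS.
  + by apply: rcore_sub => // x y yS; rewrite -agree.
  + by apply: setUSS; apply: compC_subset sS _ => x y /and3P [/Gm_Gp].
- have ext : subrel (outside_rel Gp) Gm.
    by move=> x y /and3P [Gpxy xS yS]; rewrite /Gm -addE_delE // (is_uv_in uvS xS yS).
  have sS : Sm \subset Sp by apply: score_sub_extend.
  split; first exact: nbr_subrel.
  + exact: nbr_compC_ends (delE_sym u v sG) (@addE_subrel_addE_delE T G u v).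
  + exact: sS.
  + by apply: rcore_sub sS _ => x y _ /Gm_Gp.
  + by apply: setUSS; apply: compC_subset sS ext.
Qed.
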